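(* Let $\Sigma_1,\Sigma_2$ be finite alphabets and $m\subseteq\Sigma_1^*\times\Sigma_2^*$ a string transduction. Then $\mathrm{nd}(m)$ is an mso definable graph transduction if and only if $\mathrm{ed}(m)$ is an mso definable graph transduction and $(\varepsilon,z)\in m$ implies $z=\varepsilon$.
   Context: Graphs over node alphabet $\Sigma$ and edge alphabet $\Gamma$ are triples $(V,E,\mathrm{lab})$, $E\subseteq V\times\Gamma\times V$, $\mathrm{lab}:V\to\Sigma$; $*$ denotes ''unlabelled''. $\mathrm{MSO}(\Sigma,\Gamma)$ is monadic second-order logic with node and node-set variables and atomic formulas $\mathrm{lab}_\sigma(x)$, $\mathrm{edge}_\gamma(x,y)$, $x=y$, $x\in X$. An mso definable graph transduction is a partial function given by a closed domain formula $\varphi_{\mathrm{dom}}$, a finite copy set $C$, node formulas $\varphi^c_\sigma(x)$ and edge formulas $\varphi^{c_1,c_2}_\gamma(x,y)$ over the input logic; on an input $g\models\varphi_{\mathrm{dom}}$ the output has nodes $(u,c)$ for which exactly one $\sigma$ satisfies $g\models\varphi^c_\sigma(u)$ (labelled $\sigma$), and edges $((u,c_1),\gamma,(v,c_2))$ between such nodes iff $g\models\varphi^{c_1,c_2}_\gamma(u,v)$. For $w$ of length $k$: $\mathrm{nd}(w)$ has $k$ nodes labelled by the letters of $w$ with $k-1$ unlabelled successor edges ($\mathrm{nd}(\varepsilon)$ is empty); $\mathrm{ed}(w)$ has $k+1$ unlabelled nodes forming a path whose $k$ edges are labelled by the letters of $w$. For a transduction $m$, $\mathrm{nd}(m)=\{(\mathrm{nd}(w),\mathrm{nd}(z))\mid(w,z)\in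 m\}$ and $\mathrm{ed}(m)=\{(\mathrm{ed}(w),\mathrm{ed}(z))\mid(w,z)\in m\}$. *)

From mathcomp Require Import all_boot.
Set Implicit Arguments. Unset Strict Implicit. Unset Printing Implicit Defensive.

Record graph (S G : Type) := Graph {
  gV : finType;
  gE : gV -> G -> gV -> bool;
  glab : gV -> S }.
Arguments gV {S G} g.
Arguments gE {S G} g _ _ _.
Arguments glab {S G} g _.

Definition iso (S G : Type) (g h : graph S G) : Prop :=
  exists f : gV g -> gV h, bijective f /\
    (forall v, glab h (f v) = glab g v) /\
    (forall u (c : G) v, gE h (f u) c (f v) = gE g u c v).

Inductive mso (S G : Type) : Type :=
| MLab  of S & nat
| MEdge of G & nat & nat
| MEq   of nat & nat
| MIn   of nat & nat
| MTrue
| MNot  of mso S G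
| MAnd  of mso S G & mso S G
| MOr   of mso S G & mso S G
| MExN  of nat & mso S G
| MAllN of nat & mso S G
| MExS  of nat & mso S G
| MAllS of nat & mso S G.

(* Environments: node variables may be unassigned (None), in which case
   atoms mentioning them are false; set variables default to the empty set. *)
Definition upd (T : Type) (e : nat -> T) (i : nat) (t : T) : nat -> T :=
  fun j => if j == i then t else e j.

Fixpoint sat {S G : Type} (g : graph S G)
  (en : nat -> option (gV g)) (es : nat -> {set gV g}) (phi : mso S G) : Prop :=
  match phi with
  | MLab s x => exists u, en x = Some u /\ glab g u = s
  | MEdge c x y => exists u v, en x = Some u /\ en y = Some v /\ gE g u c v
  | MEq x y => exists u, en x = Some u /\ en y = Some u
  | MIn x X => exists u, en x = Some u /\ u \in es X
  | MTrue => True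
  | MNot p => ~ sat en es p
  | MAnd p q => sat en es p /\ sat en es q
  | MOr p q => sat en es p \/ sat en es q
  | MExN x p => exists u, sat (upd en x (Some u)) es p
  | MAllN x p => forall u, sat (upd en x (Some u)) es p
  | MExS X p => exists A, sat en (upd es X A) p
  | MAllS X p => forall A, sat en (upd es X A) p
  end.
Arguments sat {S G} g en es phi.

Definition sat0 {S G} (g : graph S G) phi := sat g (fun _ => None) (fun _ => set0) phi.
Definition sat1 {S G} (g : graph S G) (u : gV g) phi :=
  sat g (upd (fun _ => None) 0 (Some u)) (fun _ => set0) phi.
Arguments sat1 {S G} g u phi.
Definition sat2 {S G} (g : graph S G) (u v : gV g) phi :=
  sat g (upd (upd (fun _ => None) 0 (Some u)) 1 (Some v)) (fun _ => set0) phi.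
Arguments sat2 {S G} g u v phi.
Arguments sat0 {S G} g phi.

Record mso_trans (S1 G1 S2 G2 : Type) := MsoTrans {
  copies : finType;
  dom_f  : mso S1 G1;
  node_f : copies -> S2 -> mso S1 G1;
  edge_f : copies -> copies -> G2 -> mso S1 G1 }.
Arguments copies {S1 G1 S2 G2} m.
Arguments dom_f {S1 G1 S2 G2} m.
Arguments node_f {S1 G1 S2 G2} m _ _.
Arguments edge_f {S1 G1 S2 G2} m _ _ _.

Definition out_node S1 G1 S2 G2 (t : mso_trans S1 G1 S2 G2) (g : graph S1 G1)
  (u : gV g) (c : copies t) : Prop :=
  exists! s : S2, sat1 g u (node_f t c s).
Arguments out_node {S1 G1 S2 G2} t g u c.

(* h is (isomorphic to) the output graph of t on input g. *)
Definition is_output S1 G1 S2 G2 (t : mso_trans S1 G1 S2 G2) (g : graph S1 G1)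
  (h : graph S2 G2) : Prop :=
  exists f : gV h -> gV g * copies t,
    injective f /\
    (forall u c, out_node t g u c <-> exists v, f v = (u, c)) /\
    (forall v, sat1 g (f v).1 (node_f t (f v).2 (glab h v))) /\
    (forall v1 (c : G2) v2,
        gE h v1 c v2 <-> sat2 g (f v1).1 (f v2).1 (edge_f t (f v1).2 (f v2).2 c)).

Definition mso_definable (S1 G1 : Type) (Sf2 Gf2 : finType)
  (R : graph S1 G1 -> graph Sf2 Gf2 -> Prop) : Prop :=
  exists t : mso_trans S1 G1 Sf2 Gf2,
    forall g h, R g h <-> (sat0 g (dom_f t) /\ is_output t g h).

Definition nd (A : finType) (w : seq A) : graph A unit :=
  @Graph A unit 'I_(size w)
    (fun i _ j => (j : nat) == i.+1)
    (fun i => tnth (in_tuple w) i).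

Definition ed (A : finType) (w : seq A) : graph unit A :=
  @Graph unit A 'I_(size w).+1
    (fun i a j => ((j : nat) == i.+1) && (nth a w i == a))
    (fun _ => tt).

Definition nd_rel (A B : finType) (m : seq A -> seq B -> Prop)
  (g : graph A unit) (h : graph B unit) : Prop :=
  exists w z, m w z /\ iso g (nd w) /\ iso h (nd z).

Definition ed_rel (A B : finType) (m : seq A -> seq B -> Prop)
  (g : graph unit A) (h : graph unit B) : Prop :=
  exists w z, m w z /\ iso g (ed w) /\ iso h (ed z).

From mathcomp Require Import all_boot boolp.
Set Implicit Arguments. Unset Strict Implicit. Unset Printing Implicit Defensive.

Lemma inj_surj_bij (A B : Type) (f : A -> B) :
  injective f -> (forall y, exists x, f x = y) -> bijective f.
Proof.
move=> f_inj f_surj; pose h y := sval (cid (f_surj y)).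
have hK y : f (h y) = y by rewrite /h; case: cid.
by exists h => [x|y]; [apply: f_inj; rewrite hK | exact: hK].
Qed.

Section Environments.
Variable T : Type.
Implicit Types (e : nat -> T) (t : T).

Lemma upd_same e x t : upd e x t x = t.
Proof. by rewrite /upd eqxx. Qed.

Lemma upd_other e x y t : y != x -> upd e x t y = e y.
Proof. by rewrite /upd => /negbTE ->. Qed.

Lemma updC e x y t t' : x != y -> upd (upd e x t) y t' = upd (upd e y t') x t.
Proof.
move=> nxy; apply: funext => n; rewrite /upd.
by case: (eqVneq n y) => [->|//]; rewrite eq_sym (negbTE nxy).
Qed.

Lemma upd_comp e (r : nat -> nat) x t :
  injective r -> upd e (r x) t \o r = upd (e \o r) x t.
Proof. by move=> r_inj; apply: funext => n; rewrite /upd /= (inj_eq r_inj). Qed.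

Lemma map_upd (U : Type) (f : T -> U) e x t :
  (fun n => f (upd e x t n)) = upd (fun n => f (e n)) x (f t).
Proof. by apply: funext => n; rewrite /upd; case: eqP. Qed.

End Environments.

Section Formulas.
Variables S G : Type.
Implicit Types (g : graph S G) (phi : mso S G).

Definition MFalse : mso S G := MNot (MTrue S G).

Definition MBigOr (I : finType) (F : I -> mso S G) : mso S G :=
  foldr (@MOr S G) MFalse (map F (enum I)).
Definition MBigAnd (I : finType) (F : I -> mso S G) : mso S G :=
  foldr (@MAnd S G) (MTrue S G) (map F (enum I)).

#[global] Arguments MFalse : simpl never.
#[global] Arguments MBigOr : simpl never.
#[global] Arguments MBigAnd : simpl never.

Lemma sat_MFalse g en es : ~ sat g en es MFalse.
Proof. by apply. Qed.

Definition Mbool (b : bool) : mso S G := if b then MTrue S G else MFalse.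

Lemma sat_Mbool g en es b : sat g en es (Mbool b) <-> b.
Proof. by case: b => //; split=> // /sat_MFalse. Qed.

Lemma sat0_MAnd g phi psi : sat0 g (MAnd phi psi) <-> sat0 g phi /\ sat0 g psi.
Proof. by []. Qed.

Lemma sat0_MOr g phi psi : sat0 g (MOr phi psi) <-> sat0 g phi \/ sat0 g psi.
Proof. by []. Qed.

Lemma sat2_MAnd g u v phi psi : sat2 g u v (MAnd phi psi) <-> sat2 g u v phi /\ sat2 g u v psi.
Proof. by []. Qed.

Lemma sat_foldr_MOr g en es (I : eqType) (s : seq I) (F : I -> mso S G) :
  sat g en es (foldr (@MOr S G) MFalse (map F s)) <->
  exists2 i, i \in s & sat g en es (F i).
Proof.
elim: s => [|j s IH] /=; first by split=> [/(_ Logic.I)|[i]]; rewrite ?in_nil.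
rewrite IH; split=> [[Hj|[i si Hi]]|[i]].
- by exists j; rewrite ?inE ?eqxx.
- by exists i; rewrite ?inE ?si ?orbT.
- by rewrite inE => /orP[/eqP->|si Hi]; [left | right; exists i].
Qed.

Lemma sat_foldr_MAnd g en es (I : eqType) (s : seq I) (F : I -> mso S G) :
  sat g en es (foldr (@MAnd S G) (MTrue S G) (map F s)) <->
  forall i, i \in s -> sat g en es (F i).
Proof.
elim: s => [|j s IH] /=; first by [].
rewrite IH; split=> [[Hj Hs] i|H].
  by rewrite inE => /orP[/eqP->|/Hs].
by split=> [|i si]; apply: H; rewrite inE ?eqxx ?si ?orbT.
Qed.

Lemma sat_MBigOr g en es (I : finType) (F : I -> mso S G) :
  sat g en es (MBigOr F) <-> exists i, sat g en es (F i).
Proof. by rewrite /MBigOr sat_foldr_MOr; split=> [[i _]|[i]]; exists i; rewrite ?mem_enum. Qed.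

Lemma sat_MBigAnd g en es (I : finType) (F : I -> mso S G) :
  sat g en es (MBigAnd F) <-> forall i, sat g en es (F i).
Proof. by rewrite /MBigAnd sat_foldr_MAnd; split=> H i => [|_]; apply: H; rewrite mem_enum. Qed.

Fixpoint mso_ren (r s : nat -> nat) phi : mso S G :=
  match phi with
  | MLab a x => MLab G a (r x)
  | MEdge c x y => MEdge S c (r x) (r y)
  | MEq x y => MEq S G (r x) (r y)
  | MIn x X => MIn S G (r x) (s X)
  | MTrue => MTrue S G
  | MNot p => MNot (mso_ren r s p)
  | MAnd p q => MAnd (mso_ren r s p) (mso_ren r s q)
  | MOr p q => MOr (mso_ren r s p) (mso_ren r s q)
  | MExN x p => MExN (r x) (mso_ren r s p)
  | MAllN x p => MAllN (r x) (mso_ren r s p)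
  | MExS X p => MExS (s X) (mso_ren r s p)
  | MAllS X p => MAllS (s X) (mso_ren r s p)
  end.

Lemma sat_ren g r s : injective r -> injective s ->
  forall phi en es, sat g en es (mso_ren r s phi) <-> sat g (en \o r) (es \o s) phi.
Proof.
move=> r_inj s_inj; elim=> /=; try (intros; reflexivity).
- by move=> p IH en es; rewrite IH.
- by move=> p IHp q IHq en es; rewrite IHp IHq.
- by move=> p IHp q IHq en es; rewrite IHp IHq.
- by move=> x p IH en es; split=> -[u]; exists u; move: p0; rewrite IH upd_comp.
- by move=> x p IH en es; split=> H u; move: (H u); rewrite IH upd_comp.
- by move=> X p IH en es; split=> -[A]; exists A; move: p0; rewrite IH upd_comp.
- by move=> X p IH en es; split=> H A; move: (H A); rewrite IH upd_comp.
Qed.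

End Formulas.

Section Isomorphism.
Variables S G : Type.
Implicit Types g h k : graph S G.

Lemma iso_refl g : iso g g.
Proof. by exists id; split; [exists id|]. Qed.

Lemma iso_sym g h : iso g h -> iso h g.
Proof.
case=> f [[f' fK f'K] [f_lab f_edge]]; exists f'; split; first by exists f.
split=> [v|u c v]; first by rewrite -[in RHS](f'K v) f_lab.
by rewrite -[in RHS](f'K u) -[in RHS](f'K v) f_edge.
Qed.

Lemma iso_trans g h k : iso g h -> iso h k -> iso g k.
Proof.
case=> f [f_bij [f_lab f_edge]] [f' [f'_bij [f'_lab f'_edge]]].
exists (f' \o f); split; first exact: bij_comp.
by split=> [v|u c v] /=; rewrite ?f'_lab ?f_lab ?f'_edge ?f_edge.
Qed.

Lemma iso_empty g h : (gV g -> False) -> (gV h -> False) -> iso g h.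
Proof.
move=> g0 h0; exists (fun u => match g0 u with end); split.
  by exists (fun v => match h0 v with end) => x; [case: (g0 x) | case: (h0 x)].
by split=> [v|u]; case: (g0 v) || case: (g0 u).
Qed.

Variables (g h : graph S G) (f : gV g -> gV h).
Hypotheses (f_bij : bijective f) (f_lab : forall v, glab h (f v) = glab g v)
  (f_edge : forall u c v, gE h (f u) c (f v) = gE g u c v).

Lemma sat_iso phi en es :
  sat g en es phi <-> sat h (fun n => omap f (en n)) (fun n => f @: es n) phi.
Proof.
have f_inj := bij_inj f_bij; case: f_bij => f' fK f'K.
have imset_upd (e : nat -> {set gV g}) X A :
    (fun n => f @: upd e X A n) = upd (fun n => f @: e n) X (f @: A).
  exact: (map_upd (fun B : {set gV g} => f @: B)).
have imsetK (B : {set gV h}) : f @: (f' @: B) = B.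
  by rewrite -imset_comp (eq_imset _ f'K) imset_id.
elim: phi en es => /=.
- move=> s x en es; split=> [[u [-> <-]]|[v []]]; first by exists (f u).
  by case: (en x) => [u|] //= [<-] <-; exists u.
- move=> c x y en es; split=> [[u [v [-> [-> E]]]]|[u' [v' []]]].
    by exists (f u), (f v); rewrite f_edge.
  case: (en x) => [u|] //= [<-] []; case: (en y) => [v|] //= [<-].
  by rewrite f_edge; exists u, v.
- move=> x y en es; split=> [[u [-> ->]]|[v []]]; first by exists (f u).
  by case: (en x) => [u|] //= [<-]; case: (en y) => [u'|] //= [/f_inj ->]; exists u.
- move=> x X en es; split=> [[u [-> H]]|[v []]]; first by exists (f u); rewrite mem_imset.
  by case: (en x) => [u|] //= [<-]; rewrite mem_imset // => H; exists u.
- done.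
- by move=> p IH en es; rewrite IH.
- by move=> p IHp q IHq en es; rewrite IHp IHq.
- by move=> p IHp q IHq en es; rewrite IHp IHq.
- move=> x p IH en es; split=> [[u /IH]|[v H]]; first by rewrite map_upd; exists (f u).
  by exists (f' v); apply/IH; rewrite map_upd /= f'K.
- move=> x p IH en es; split=> H v; last by apply/IH; rewrite map_upd; apply: H.
  by move: (H (f' v)) => /IH; rewrite map_upd /= f'K.
- move=> X p IH en es; split=> [[A /IH]|[B H]]; first by rewrite imset_upd; exists (f @: A).
  by exists (f' @: B); apply/IH; rewrite imset_upd imsetK.
- move=> X p IH en es; split=> H B; last by apply/IH; rewrite imset_upd; apply: H.
  by move: (H (f' @: B)) => /IH; rewrite imset_upd imsetK.
Qed.

Lemma imset_set0 : (fun _ : nat => f @: (set0 : {set gV g})) = (fun _ => set0).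
Proof. by apply: funext => n; rewrite imset0. Qed.

Lemma sat0_iso phi : sat0 g phi <-> sat0 h phi.
Proof. by rewrite /sat0 sat_iso imset_set0. Qed.

Lemma sat1_iso phi u : sat1 g u phi <-> sat1 h (f u) phi.
Proof. by rewrite /sat1 sat_iso map_upd imset_set0. Qed.

Lemma sat2_iso phi u v : sat2 g u v phi <-> sat2 h (f u) (f v) phi.
Proof. by rewrite /sat2 sat_iso !map_upd imset_set0. Qed.

End Isomorphism.

Lemma iso_sat0 S G (g h : graph S G) phi : iso g h -> sat0 g phi <-> sat0 h phi.
Proof. by case=> f [f_bij [f_lab f_edge]]; exact: sat0_iso f_bij f_lab f_edge phi. Qed.

Section OutputGraph.
Variables (S1 G1 S2 G2 : Type) (t : mso_trans S1 G1 S2 G2).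
Implicit Types g : graph S1 G1.

Definition out_nodeb g (p : gV g * copies t) : bool := `[< out_node t g p.1 p.2 >].

Local Notation outV g := {p : gV g * copies t | out_nodeb p}.

Lemma out_nodeP g (n : outV g) : out_node t g (val n).1 (val n).2.
Proof. exact/asboolP/(valP n). Qed.

Definition out_lab g (n : outV g) : S2 := sval (cid (out_nodeP n)).

Lemma out_labP g (n : outV g) : sat1 g (val n).1 (node_f t (val n).2 (out_lab n)).
Proof. by rewrite /out_lab; case: cid => s []. Qed.

Lemma out_lab_eq g (n : outV g) s :
  sat1 g (val n).1 (node_f t (val n).2 s) -> out_lab n = s.
Proof. by move=> Hs; rewrite /out_lab; case: cid => s0 [_ s0_uniq] /=; apply: s0_uniq. Qed.

Lemma out_labE g (n : outV g) s :
  sat1 g (val n).1 (node_f t (val n).2 s) <-> out_lab n = s.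
Proof. by split=> [/out_lab_eq|<-] //; exact: out_labP. Qed.

Definition out_edge g (n : outV g) (a : G2) (n' : outV g) : bool :=
  `[< sat2 g (val n).1 (val n').1 (edge_f t (val n).2 (val n').2 a) >].

Definition out_graph g : graph S2 G2 := @Graph S2 G2 (outV g) (@out_edge g) (@out_lab g).

Lemma out_edgeP g (n n' : outV g) a :
  gE (out_graph g) n a n' <-> sat2 g (val n).1 (val n').1 (edge_f t (val n).2 (val n').2 a).
Proof. by split=> /asboolP. Qed.

Lemma is_outputE g h : is_output t g h <-> iso h (out_graph g).
Proof.
split=> [[f [f_inj [f_out [f_lab f_edge]]]] | [F [F_bij [F_lab F_edge]]]].
- have f_outb v : out_nodeb (f v).
    by apply/asboolP/f_out; exists v; rewrite -surjective_pairing.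
  exists (fun v => exist _ (f v) (f_outb v)); split.
    apply: inj_surj_bij => [u v /(congr1 val) /f_inj //|n].
    have [v fv] := (f_out _ _).1 (out_nodeP n).
    by exists v; apply: val_inj; rewrite /= fv -surjective_pairing.
  split=> [v|u c v] /=; first exact/out_lab_eq/f_lab.
  exact: asbool_equiv_eqP idP (iff_sym (f_edge u c v)).
- exists (fun v => val (F v)); split; first by move=> u v /val_inj /(bij_inj F_bij).
  split=> [u c|]; last split=> [v|v1 c v2]; last by rewrite -F_edge; exact: out_edgeP.
    split=> [ucP|[v Fv]]; last by have := out_nodeP (F v); rewrite Fv.
    have [F' _ F'K] := F_bij; have ucb : out_nodeb (u, c) by exact/asboolP.
    by exists (F' (exist _ (u, c) ucb)); rewrite F'K.
  by rewrite -F_lab; exact: out_labP.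
Qed.

Lemma is_output_graph g : is_output t g (out_graph g).
Proof. exact/is_outputE/iso_refl. Qed.

Lemma out_graph_iso g g' : iso g g' -> iso (out_graph g) (out_graph g').
Proof.
case=> f [f_bij [f_lab f_edge]]; apply/is_outputE.
have [f' fK f'K] := f_bij.
have out_node_f u c : out_node t g u c <-> out_node t g' (f u) c.
  have e s : sat1 g u (node_f t c s) <-> sat1 g' (f u) (node_f t c s).
    exact: sat1_iso f_bij f_lab f_edge _ u.
  by split=> -[s [Hs s_uniq]]; exists s; split=> [|s' /e /s_uniq //]; apply/e.
exists (fun n => (f (val n).1, (val n).2)); split.
  move=> n n' [/(bij_inj f_bij) E1 E2]; apply: val_inj.
  by rewrite [val n]surjective_pairing [val n']surjective_pairing E1 E2.
split=> [u' c|]; last split=> [n|n1 c n2] /=.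
- split=> [u'c|[n [<- <-]]]; last exact/out_node_f/out_nodeP.
  have ucb : out_nodeb (f' u', c) by apply/asboolP/out_node_f; rewrite f'K.
  by exists (exist _ (f' u', c) ucb); rewrite /= f'K.
- exact/(sat1_iso f_bij f_lab f_edge)/out_labP.
- by rewrite out_edgeP (sat2_iso f_bij f_lab f_edge).
Qed.

End OutputGraph.

Notation outV t g := {p : gV g * copies t | @out_nodeb _ _ _ _ t g p}.

Section Pullback.
Variables (S1 G1 : Type) (S2 : finType) (G2 : Type) (t : mso_trans S1 G1 S2 G2).
Local Notation C := (copies t).
Implicit Types (g : graph S1 G1) (k : nat -> option C).

Definition Mout (c : C) : mso S1 G1 :=
  MBigOr (fun s => MAnd (node_f t c s)
    (MBigAnd (fun s' => if s' == s then MTrue S1 G1 else MNot (node_f t c s')))).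

#[global] Arguments Mout : simpl never.

Lemma sat_Mout g en es c :
  sat g en es (Mout c) <-> exists! s, sat g en es (node_f t c s).
Proof.
rewrite sat_MBigOr; split=> -[s [Hs s_uniq]]; exists s; split=> //.
- move=> s' Hs'; apply/eqP/negPn/negP => ss'.
  by move/sat_MBigAnd: s_uniq => /(_ s'); rewrite eq_sym (negbTE ss').
- apply/sat_MBigAnd => s'; case: eqP => //= ss' Hs'.
  by apply: ss'; symmetry; apply: s_uniq.
Qed.

(* Even node variables simulate the variables of the pulled-back formula;
   odd ones from 3 on (and odd set variables) are scratch space for inlining
   the node and edge formulas of [t]. Variable 1 stays free for [pull2]. *)
Definition scratch n := n.*2.+3.
Definition scratch_set n := n.*2.+1.

Lemma scratch_inj : injective scratch.
Proof. by move=> m n /= [/double_inj]. Qed.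

Lemma scratch_set_inj : injective scratch_set.
Proof. by move=> m n /= [/double_inj]. Qed.

Definition Msubst1 (psi : mso S1 G1) x : mso S1 G1 :=
  MExN 3 (MAnd (MEq S1 G1 3 x) (mso_ren scratch scratch_set psi)).

Definition Msubst2 (psi : mso S1 G1) x y : mso S1 G1 :=
  MExN 3 (MExN 5 (MAnd (MEq S1 G1 3 x) (MAnd (MEq S1 G1 5 y)
    (mso_ren scratch scratch_set psi)))).

#[global] Arguments Msubst1 : simpl never.
#[global] Arguments Msubst2 : simpl never.

Section Substitution.
Variables (g : graph S1 G1) (en : nat -> option (gV g)) (es : nat -> {set gV g}).
Hypotheses (en_scratch : forall n, en (scratch n) = None)
  (es_scratch : forall n, es (scratch_set n) = set0).

Lemma es_scratchE : es \o scratch_set = fun _ => set0.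
Proof. exact: funext. Qed.

Lemma sat_Msubst1 psi x : ~~ odd x ->
  sat g en es (Msubst1 psi x) <-> exists2 u, en x = Some u & sat1 g u psi.
Proof.
move=> x_even; have x3 : x != 3 by apply: contraNneq x_even => ->.
have envE u : upd en 3 (Some u) \o scratch = upd (fun _ => None) 0 (Some u).
  by apply: funext => -[|n]; rewrite /= /upd //= en_scratch.
rewrite /= /sat1; split=> [[u [[u0 []]]]|[u xu Hu]].
  rewrite upd_same upd_other // => -[<-] xu.
  by rewrite sat_ren ?envE ?es_scratchE; [exists u | exact: scratch_inj | exact: scratch_set_inj].
exists u; split; first by exists u; rewrite upd_same upd_other.
by rewrite sat_ren ?envE ?es_scratchE //; [exact: scratch_inj | exact: scratch_set_inj].
Qed.

Lemma sat_Msubst2 psi x y : ~~ odd x -> ~~ odd y ->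
  sat g en es (Msubst2 psi x y) <->
  exists u v, [/\ en x = Some u, en y = Some v & sat2 g u v psi].
Proof.
move=> x_even y_even.
have [x3 x5] : x != 3 /\ x != 5 by split; apply: contraNneq x_even => ->.
have [y3 y5] : y != 3 /\ y != 5 by split; apply: contraNneq y_even => ->.
have envE u v : upd (upd en 3 (Some u)) 5 (Some v) \o scratch =
                upd (upd (fun _ => None) 0 (Some u)) 1 (Some v).
  by apply: funext => -[|[|n]]; rewrite /= /upd //= en_scratch.
have ren_psi := sat_ren (g:=g) scratch_inj scratch_set_inj psi.
have env_other u v z : z != 3 -> z != 5 -> upd (upd en 3 u) 5 v z = en z.
  by move=> z3 z5; rewrite !upd_other.
rewrite /= /sat2; split=> [[u [v [[u0 []]]]]|[u [v [xu yv Huv]]]].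
  rewrite upd_other // upd_same env_other // => -[<-] xu [[v0 []]].
  by rewrite upd_same env_other // => -[<-] yv; rewrite ren_psi envE es_scratchE; exists u, v.
exists u, v; split; first by exists u; rewrite upd_other // upd_same env_other.
split; first by exists v; rewrite upd_same env_other.
by rewrite ren_psi envE es_scratchE.
Qed.

End Substitution.

Definition enc X (c : C) : nat := (X * #|C| + enum_rank c).*2.

Lemma enc_inj X Y c d : enc X c = enc Y d -> X = Y /\ c = d.
Proof.
move=> /double_inj E; have C_gt0 : 0 < #|C| by apply/card_gt0P; exists c.
have cd : c = d.
  apply/enum_rank_inj/val_inj; move: (congr1 (modn^~ #|C|) E).
  by rewrite !modnMDl !modn_small.
by move: E; rewrite cd => /addIn /eqP; rewrite eqn_pmul2r // => /eqP.
Qed.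

Lemma enc_scratch_set X c n : enc X c != scratch_set n.
Proof. by apply/negP => /eqP /(congr1 odd); rewrite /= !odd_double. Qed.

Fixpoint upd_family (A : Type) (es : nat -> A) X (cs : seq C) (F : C -> A) :=
  if cs is c :: cs' then upd (upd_family es X cs' F) (enc X c) (F c) else es.

Section UpdFamily.
Variables (A : Type) (X : nat).
Implicit Types (es : nat -> A) (F : C -> A) (cs : seq C).

Lemma upd_family_upd es cs F c a : c \notin cs ->
  upd_family (upd es (enc X c) a) X cs F = upd (upd_family es X cs F) (enc X c) a.
Proof.
elim: cs => [|d cs IH] //=; rewrite inE negb_or => /andP[cd ccs].
by rewrite IH // updC //; apply: contra cd => /eqP /enc_inj [_ ->].
Qed.

Lemma eq_upd_family es cs F F' : {in cs, F =1 F'} ->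
  upd_family es X cs F = upd_family es X cs F'.
Proof.
elim: cs => [|d cs IH] //= FF'; rewrite FF' ?mem_head // IH // => e ecs.
by apply: FF'; rewrite inE ecs orbT.
Qed.

Lemma upd_family_in es cs F c : c \in cs -> upd_family es X cs F (enc X c) = F c.
Proof.
elim: cs => [|d cs IH] //=; rewrite inE; case: (eqVneq c d) => [->|cd] /=.
  by rewrite upd_same.
by move=> /IH <-; rewrite upd_other //; apply: contra cd => /eqP /enc_inj [_ ->].
Qed.

Lemma upd_family_out es cs F n :
  (forall c, enc X c != n) -> upd_family es X cs F n = es n.
Proof. by move=> encn; elim: cs => [|d cs IH] //=; rewrite upd_other 1?eq_sym. Qed.

Lemma upd_family_extend es cs F c a : c \notin cs ->
  upd_family (upd es (enc X c) a) X cs F =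
  upd_family es X (c :: cs) (fun d => if d == c then a else F d).
Proof.
move=> ccs; rewrite upd_family_upd //= eqxx; congr upd; apply: eq_upd_family.
by move=> d dcs; case: eqP => // dc; rewrite -dc dcs in ccs.
Qed.

End UpdFamily.

Lemma sat_MExS_family g en es X (cs : seq C) body : uniq cs ->
  sat g en es (foldr (fun c => MExS (enc X c)) body cs) <->
  exists F : C -> {set gV g}, sat g en (upd_family es X cs F) body.
Proof.
elim: cs es => [|c cs IH] es /=; first by split=> [Hb|[F Hb]] //; exists (fun _ => set0).
case/andP=> ccs /IH{}IH; split=> [[a /IH[F Hf]]|[F Hf]].
  by move: Hf; rewrite upd_family_extend //; exists (fun d => if d == c then a else F d).
by exists (F c); apply/IH; exists F; rewrite upd_family_upd.
Qed.

Lemma sat_MAllS_family g en es X (cs : seq C) body : uniq cs ->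
  sat g en es (foldr (fun c => MAllS (enc X c)) body cs) <->
  forall F : C -> {set gV g}, sat g en (upd_family es X cs F) body.
Proof.
elim: cs es => [|c cs IH] es /=; first by split=> // /(_ (fun _ => set0)).
case/andP=> ccs /IH{}IH; split=> [H F|H a]; last first.
  by apply/IH => F; rewrite upd_family_extend //; apply: H.
by move: (H (F c)) => /IH /(_ F); rewrite upd_family_upd.
Qed.

Fixpoint pull k (phi : mso S2 G2) : mso S1 G1 :=
  match phi with
  | MLab s x => if k x is Some c then Msubst1 (node_f t c s) x.*2 else MFalse _ _
  | MEdge a x y =>
      if (k x, k y) is (Some c, Some d) then Msubst2 (edge_f t c d a) x.*2 y.*2
      else MFalse _ _
  | MEq x y => if k x == k y then MEq S1 G1 x.*2 y.*2 else MFalse _ _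
  | MIn x X => if k x is Some c then MIn S1 G1 x.*2 (enc X c) else MFalse _ _
  | MTrue => MTrue S1 G1
  | MNot p => MNot (pull k p)
  | MAnd p q => MAnd (pull k p) (pull k q)
  | MOr p q => MOr (pull k p) (pull k q)
  | MExN x p => MBigOr (fun c =>
      MExN x.*2 (MAnd (Msubst1 (Mout c) x.*2) (pull (upd k x (Some c)) p)))
  | MAllN x p => MBigAnd (fun c =>
      MAllN x.*2 (MOr (MNot (Msubst1 (Mout c) x.*2)) (pull (upd k x (Some c)) p)))
  | MExS X p => foldr (fun c => MExS (enc X c)) (pull k p) (enum C)
  | MAllS X p => foldr (fun c => MAllS (enc X c)) (pull k p) (enum C)
  end.

(* [k] records, for each variable of the output formula, the copy its value
   lives in: it is the static part of an output valuation [en]. *)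
Definition pull_rel g k (en : nat -> option (outV t g)) (es : nat -> {set outV t g})
    (en' : nat -> option (gV g)) (es' : nat -> {set gV g}) :=
  [/\ forall x, en' x.*2 = omap (fun n => (val n).1) (en x),
      forall x, k x = omap (fun n => (val n).2) (en x),
      forall n, en' (scratch n) = None,
      forall X (n : outV t g), ((val n).1 \in es' (enc X (val n).2)) = (n \in es X)
    & forall n, es' (scratch_set n) = set0].

Definition pull_spec g (phi : mso S2 G2) := forall k en es en' es',
  pull_rel k en es en' es' -> sat (out_graph t g) en es phi <-> sat g en' es' (pull k phi).

Section PullSpec.
Variable g : graph S1 G1.

Lemma pull_rel_updN k en es en' es' x (n : outV t g) :
  pull_rel k en es en' es' ->
  pull_rel (upd k x (Some (val n).2)) (upd en x (Some n)) es
    (upd en' x.*2 (Some (val n).1)) es'.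
Proof.
case=> en'E kE en'_scr es'E es'_scr; split=> //.
- by move=> y; rewrite /upd (inj_eq double_inj); case: eqP.
- by move=> y; rewrite /upd; case: eqP.
- move=> m; rewrite upd_other ?en'_scr //.
  by apply/negP => /eqP /(congr1 odd); rewrite /= !odd_double.
Qed.

Lemma pull_rel_updS k en es en' es' X (A : {set outV t g}) (F : C -> {set gV g}) :
  pull_rel k en es en' es' ->
  (forall n : outV t g, ((val n).1 \in F (val n).2) = (n \in A)) ->
  pull_rel k en (upd es X A) en' (upd_family es' X (enum C) F).
Proof.
case=> en'E kE en'_scr es'E es'_scr FA; split=> //.
- move=> Y n; rewrite /upd; case: eqP => [->|YX]; first by rewrite upd_family_in ?mem_enum.
  by rewrite upd_family_out ?es'E // => c; apply/eqP => /enc_inj[XY _]; apply: YX.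
- by move=> n; rewrite upd_family_out ?es'_scr // => c; exact: enc_scratch_set.
Qed.

Lemma pull_rel_out k en es en' es' x u c : pull_rel k en es en' es' ->
  sat g (upd en' x.*2 (Some u)) es' (Msubst1 (Mout c) x.*2) <-> out_node t g u c.
Proof.
case=> _ _ en'_scr _ es'_scr.
rewrite sat_Msubst1 ?odd_double //; last first.
  move=> m; rewrite upd_other ?en'_scr //.
  by apply/negP => /eqP /(congr1 odd); rewrite /= !odd_double.
rewrite upd_same; split=> [[_ [<-]] /sat_Mout //|Hu]; exists u => //.
exact/sat_Mout.
Qed.

Lemma pull_spec_lab s x : pull_spec g (MLab G2 s x).
Proof.
move=> k en es en' es' R; have [en'E kE en'_scr _ es'_scr] := R.
rewrite /= kE; case ex: (en x) => [n|]; cbn; last by split=> [[u []]|/sat_MFalse].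
rewrite sat_Msubst1 ?odd_double // en'E ex /=.
split=> [[m [[<-] <-]]|[u [<-] Hs]]; first by exists (val n).1; last exact: out_labP.
by exists n; split; last exact: out_lab_eq.
Qed.

Lemma pull_spec_edge a x y : pull_spec g (MEdge S2 a x y).
Proof.
move=> k en es en' es' R; have [en'E kE en'_scr _ es'_scr] := R.
rewrite /= !kE; case ex: (en x) => [n|]; last by split=> [[u [v []]]|/sat_MFalse].
case ey: (en y) => [n'|]; last by split=> [[u [v [_ []]]]|/sat_MFalse].
rewrite sat_Msubst2 ?odd_double // !en'E ex ey /=; split.
  by case=> _ [_ [[<-] [[<-]]]] /out_edgeP; exists (val n).1, (val n').1.
by case=> _ [_ [[<-] [<-]]] /out_edgeP; exists n, n'.
Qed.

Lemma pull_spec_eq x y : pull_spec g (MEq S2 G2 x y).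
Proof.
move=> k en es en' es' [en'E kE _ _ _] /=; rewrite !kE.
case ex: (en x) => [n|]; case ey: (en y) => [n'|]; cbn.
- case: eqP => [cc'|ncc]; last by split=> [[m [[<-] [nn']]]|/sat_MFalse //]; case: ncc; rewrite nn'.
  rewrite /= !en'E ex ey /=; split=> [[m [[<-] [<-]]]|[u [[<-] [nn']]]]; first by eexists.
  exists n; split=> //; congr Some; apply: val_inj.
  by rewrite [val n]surjective_pairing [val n']surjective_pairing nn' cc'.
- by split=> [[m [_ nm]]|/sat_MFalse].
- by split=> [[m [nm _]]|/sat_MFalse].
- by split=> [[m []]|[u []]]; rewrite en'E ex.
Qed.

Lemma pull_spec_in x X : pull_spec g (MIn S2 G2 x X).
Proof.
move=> k en es en' es' [en'E kE _ es'E _] /=; rewrite kE.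
case ex: (en x) => [n|]; cbn; last by split=> [[m []]|/sat_MFalse].
rewrite en'E ex /=; split=> [[m [[<-] nX]]|[u [[<-]]]].
  by exists (val n).1; rewrite es'E.
by rewrite es'E; exists n.
Qed.

Lemma pull_spec_exN x p : pull_spec g p -> pull_spec g (MExN x p).
Proof.
move=> IH k en es en' es' R; rewrite /= sat_MBigOr; split=> [[n Hp]|[c [u [ucP Hp]]]].
  exists (val n).2, (val n).1; split; first exact/(pull_rel_out _ _ _ R)/out_nodeP.
  exact/(IH _ _ _ _ _ (pull_rel_updN x n R)).
have ucb : out_nodeb (t:=t) (g:=g) (u, c) by exact/asboolP/((pull_rel_out _ _ _ R).1 ucP).
by exists (exist _ (u, c) ucb); apply/(IH _ _ _ _ _ (pull_rel_updN x _ R)).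
Qed.

Lemma pull_spec_allN x p : pull_spec g p -> pull_spec g (MAllN x p).
Proof.
move=> IH k en es en' es' R; rewrite /= sat_MBigAnd; split=> [Hp c u|Hp n].
  have [ucP|ucN] := EM (out_node t g u c); last by left => /(pull_rel_out _ _ _ R).
  have ucb : out_nodeb (t:=t) (g:=g) (u, c) by exact/asboolP.
  by right; apply/(IH _ _ _ _ _ (pull_rel_updN x (exist _ (u, c) ucb) R)).
have [/(_ ((pull_rel_out _ _ _ R).2 (out_nodeP n)))|] := Hp (val n).2 (val n).1 => // Hn.
exact/(IH _ _ _ _ _ (pull_rel_updN x n R)).
Qed.

Lemma out_family (A : {set outV t g}) :
  {F : C -> {set gV g} | forall n : outV t g, ((val n).1 \in F (val n).2) = (n \in A)}.
Proof.
exists (fun c => [set u | [exists n in A, val n == (u, c)]]) => n.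
rewrite inE; apply/existsP/idP => [[n' /andP[n'A /eqP]]|nA].
  by rewrite -surjective_pairing => /val_inj <-.
by exists n; rewrite nA -surjective_pairing eqxx.
Qed.

Lemma out_set_family (F : C -> {set gV g}) :
  forall n : outV t g, ((val n).1 \in F (val n).2) =
                       (n \in [set n : outV t g | (val n).1 \in F (val n).2]).
Proof. by move=> n; rewrite inE. Qed.

Lemma pull_spec_exS X p : pull_spec g p -> pull_spec g (MExS X p).
Proof.
move=> IH k en es en' es' R; rewrite /= sat_MExS_family ?enum_uniq //.
split=> [[A]|[F]].
  by have [F FA] := out_family A; move/(IH _ _ _ _ _ (pull_rel_updS X R FA)) => Hp; exists F.
by move/(IH _ _ _ _ _ (pull_rel_updS X R (out_set_family F))) => Hp; eexists; exact: Hp.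
Qed.

Lemma pull_spec_allS X p : pull_spec g p -> pull_spec g (MAllS X p).
Proof.
move=> IH k en es en' es' R; rewrite /= sat_MAllS_family ?enum_uniq //.
split=> [Hp F|Hp A]; first exact/(IH _ _ _ _ _ (pull_rel_updS X R (out_set_family F)))/Hp.
by have [F FA] := out_family A; apply/(IH _ _ _ _ _ (pull_rel_updS X R FA)).
Qed.

Lemma pull_correct phi : pull_spec g phi.
Proof.
elim: phi.
- exact: pull_spec_lab.
- exact: pull_spec_edge.
- exact: pull_spec_eq.
- exact: pull_spec_in.
- by [].
- by move=> p IH k en es en' es' R; rewrite /= (IH _ _ _ _ _ R).
- by move=> p IHp q IHq k en es en' es' R; rewrite /= (IHp _ _ _ _ _ R) (IHq _ _ _ _ _ R).
- by move=> p IHp q IHq k en es en' es' R; rewrite /= (IHp _ _ _ _ _ R) (IHq _ _ _ _ _ R).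
- exact: pull_spec_exN.
- exact: pull_spec_allN.
- exact: pull_spec_exS.
- exact: pull_spec_allS.
Qed.

End PullSpec.

Definition pull0 (phi : mso S2 G2) := pull (fun _ => None) phi.
Definition pull1 c (phi : mso S2 G2) := pull (upd (fun _ => None) 0 (Some c)) phi.
Definition pull2 c d (phi : mso S2 G2) : mso S1 G1 :=
  MExN 2 (MAnd (MEq S1 G1 2 1) (pull (upd (upd (fun _ => None) 0 (Some c)) 1 (Some d)) phi)).

Lemma odd_scratch n : odd (scratch n).
Proof. by rewrite /= odd_double. Qed.

Lemma sat0_pull g phi : sat0 (out_graph t g) phi <-> sat0 g (pull0 phi).
Proof. by apply: pull_correct; split=> // X n; rewrite !inE. Qed.

Lemma sat1_pull g (n : outV t g) phi :
  sat1 (out_graph t g) n phi <-> sat1 g (val n).1 (pull1 (val n).2 phi).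
Proof.
by apply: pull_correct; split=> [[|x]|[|x]|m|X m|] //; rewrite ?inE.
Qed.

Lemma sat2_pull g (n n' : outV t g) phi :
  sat2 (out_graph t g) n n' phi <->
  sat2 g (val n).1 (val n').1 (pull2 (val n).2 (val n').2 phi).
Proof.
case: n n' => [[u c] ucb] [[v d] vdb]; rewrite {2}/sat2 /pull2 /=.
set n := exist _ (u, c) ucb; set n' := exist _ (v, d) vdb.
have R : pull_rel (upd (upd (fun _ => None) 0 (Some c)) 1 (Some d))
    (upd (upd (fun _ => None) 0 (Some n)) 1 (Some n')) (fun _ => set0)
    (upd (upd (upd (fun _ => None) 0 (Some u)) 1 (Some v)) 2 (Some v)) (fun _ => set0).
  by split=> [[|[|x]]|[|[|x]]|m|X m|] //; rewrite ?inE.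
rewrite /sat2 (pull_correct _ R); split=> [Hp|[w [[w' [ew ev]] Hp]]].
  by exists v; split; first by exists v.
have wv : w = v by move: ew ev; rewrite /upd /= => -[->] [].
by move: Hp; rewrite wv.
Qed.

End Pullback.

Section Composition.
Variables (S1 G1 : Type) (S2 : finType) (G2 S3 G3 : Type)
  (t1 : mso_trans S1 G1 S2 G2) (t2 : mso_trans S2 G2 S3 G3).
Implicit Types g : graph S1 G1.

Definition mso_comp : mso_trans S1 G1 S3 G3 :=
  @MsoTrans S1 G1 S3 G3 (copies t1 * copies t2)%type
    (MAnd (dom_f t1) (pull0 t1 (dom_f t2)))
    (fun c s => MAnd (Mout c.1) (pull1 c.1 (node_f t2 c.2 s)))
    (fun c d a => pull2 c.1 d.1 (edge_f t2 c.2 d.2 a)).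

Lemma mso_comp_dom g : sat0 g (dom_f mso_comp) <->
  sat0 g (dom_f t1) /\ sat0 (out_graph t1 g) (dom_f t2).
Proof. by rewrite (sat0_pull t1). Qed.

Lemma mso_comp_out_node g (n : outV t1 g) c2 :
  out_node mso_comp g (val n).1 ((val n).2, c2) <-> out_node t2 (out_graph t1 g) n c2.
Proof.
have n_out : sat1 g (val n).1 (Mout (val n).2) by exact/sat_Mout/out_nodeP.
split=> -[s [Hs s_uniq]]; exists s; split.
- by apply/sat1_pull; case: Hs.
- by move=> s' /sat1_pull Hs'; apply: s_uniq.
- by split; last exact/sat1_pull.
- by move=> s' [_ /sat1_pull]; apply: s_uniq.
Qed.

Lemma mso_comp_out_node_inv g u c :
  out_node mso_comp g u c -> out_node t1 g u c.1.
Proof. by case=> s [[/sat_Mout]]. Qed.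

Lemma is_output_comp g : is_output mso_comp g (out_graph t2 (out_graph t1 g)).
Proof.
exists (fun m => ((val (val m).1).1, ((val (val m).1).2, (val m).2))); split.
  move=> [[n c2] b] [[n' c2'] b'] /= [e1 e2 e3]; apply: val_inj; congr pair => //=.
  by apply: val_inj; rewrite [val n]surjective_pairing [val n']surjective_pairing e1 e2.
split=> [u [c1 c2]|]; last split=> [m|m a m'] /=.
- split=> [ucP|[m [<- <- <-]]]; last first.
    exact/mso_comp_out_node/out_nodeP.
  have ucb : out_nodeb (t:=t1) (u, c1) by exact/asboolP/(mso_comp_out_node_inv ucP).
  pose n : outV t1 g := exist _ (u, c1) ucb.
  have nb : out_nodeb (t:=t2) (g:=out_graph t1 g) (n, c2).
    exact/asboolP/(mso_comp_out_node n).
  by exists (exist _ (n, c2) nb).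
- split; first exact/sat_Mout/out_nodeP.
  by apply/sat1_pull; exact: out_labP.
- by rewrite out_edgeP sat2_pull.
Qed.

Lemma out_graph_comp g : iso (out_graph mso_comp g) (out_graph t2 (out_graph t1 g)).
Proof. exact/iso_sym/is_outputE/is_output_comp. Qed.

End Composition.

Section StringGraphs.
Variable A : finType.
Implicit Types (w : seq A) (g : graph unit A).

Local Notation lmax i := (lift ord_max i).

Lemma ed_edgeE w (i j : 'I_(size w).+1) a :
  gE (ed w) i a j = (j == i.+1 :> nat) && (nth a w i == a).
Proof. by []. Qed.

Lemma ed_edge_lift w (i j : 'I_(size w)) a :
  gE (ed w) (lmax i) a (lmax j) = (j == i.+1 :> nat) && (a == tnth (in_tuple w) i).
Proof. by rewrite ed_edgeE !lift_max (tnth_nth a) [a == _]eq_sym. Qed.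

Lemma ed_edge_to_max w (i : 'I_(size w)) a :
  gE (ed w) (lmax i) a ord_max = (i.+1 == size w) && (a == tnth (in_tuple w) i).
Proof. by rewrite ed_edgeE lift_max (tnth_nth a) [a == _]eq_sym [i.+1 == _]eq_sym. Qed.

Lemma ed_edge_from_max w a (j : 'I_(size w).+1) : gE (ed w) ord_max a j = false.
Proof. by apply/andP => -[/eqP j_eq _]; have := ltn_ord j; rewrite j_eq ltnn. Qed.

Definition ed2nd : mso_trans unit A A unit :=
  @MsoTrans unit A A unit unit (MTrue _ _)
    (fun _ s => MExN 1 (MEdge unit s 0 1))
    (fun _ _ _ => MBigOr (fun s => MEdge unit s 0 1)).

Lemma sat1_ed2nd_node g u c s : sat1 g u (node_f ed2nd c s) <-> exists v, gE g u s v.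
Proof. by split=> [[v [_ [_ [[<-] [[<-]]]]]]|[v uv]]; [exists v | exists v, u, v]. Qed.

Lemma sat2_ed2nd_edge g u v c d a :
  sat2 g u v (edge_f ed2nd c d a) <-> exists s, gE g u s v.
Proof.
rewrite /sat2 sat_MBigOr.
by split=> [[s [_ [_ [[<-] [[<-]]]]]]|[s uv]]; [exists s | exists s, u, v].
Qed.

Lemma ed_edge_succ w (i : 'I_(size w)) :
  exists j, gE (ed w) (lmax i) (tnth (in_tuple w) i) j.
Proof.
have i1 : i.+1 < (size w).+1 by rewrite ltnS.
exists (Ordinal i1); rewrite ed_edgeE lift_max eqxx /=.
exact/eqP/esym/(tnth_nth _ (in_tuple w) i).
Qed.

Lemma ed_edge_label w (i : 'I_(size w)) a j :
  gE (ed w) (lmax i) a j -> a = tnth (in_tuple w) i.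
Proof. by rewrite ed_edgeE lift_max (tnth_nth a) => /andP[_ /eqP]. Qed.

Lemma is_output_ed2nd_ed w : is_output ed2nd (ed w) (nd w).
Proof.
exists (fun i => (lmax i, tt)); split; first by move=> i j /(congr1 fst) /lift_inj.
split=> [j []|]; last split=> [i|i [] j] /=.
- split=> [[s [/sat1_ed2nd_node [v jv] _]]|[i [<-]]].
    case: (unliftP ord_max j) jv => [i ->|->] jv; first by exists i.
    by rewrite ed_edge_from_max in jv.
  exists (tnth (in_tuple w) i); split; first exact/sat1_ed2nd_node/ed_edge_succ.
  by move=> s /sat1_ed2nd_node [v /ed_edge_label].
- exact/sat1_ed2nd_node/ed_edge_succ.
- rewrite sat2_ed2nd_edge; split=> [ij|[s]]; last by rewrite ed_edge_lift => /andP[].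
  by exists (tnth (in_tuple w) i); rewrite ed_edge_lift ij eqxx.
Qed.

Definition Mlast : mso A unit := MNot (MExN 1 (MEdge A tt 0 1)).

Definition nd2ed : mso_trans A unit unit A :=
  @MsoTrans A unit unit A bool (MTrue _ _)
    (fun b _ => if b then Mlast else MTrue _ _)
    (fun b b' s => if b then MFalse _ _ else
                   if b' then MAnd (MLab unit s 0) (MEq A unit 0 1)
                   else MAnd (MLab unit s 0) (MEdge A tt 0 1)).

Definition last_node (g : graph A unit) (u : gV g) := forall v, ~ gE g u tt v.

Lemma sat1_Mlast (g : graph A unit) u : sat1 g u Mlast <-> last_node u.
Proof.
split=> [Hl v uv|Hl [v [_ [_ [[<-] [[<-]]]]]]]; last exact: Hl.
by apply: Hl; exists v, u, v.
Qed.

Lemma out_node_nd2ed (g : graph A unit) u (b : bool) :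
  out_node nd2ed g u b <-> (b -> last_node u).
Proof.
split=> [[[] [Hb _]]|Hb]; first by case: b Hb => // /sat1_Mlast.
by exists tt; split=> [|[] //]; case: b Hb => // /(_ isT) /sat1_Mlast.
Qed.

Lemma sat2_nd2ed_edge (g : graph A unit) u v (b b' : bool) s :
  sat2 g u v (edge_f nd2ed b b' s) <->
  [/\ ~~ b, glab g u = s & if b' then u = v else gE g u tt v].
Proof.
rewrite /sat2; case: b => /=; first by split=> [/(_ I)|[]].
case: b' => /=.
  by split=> [[[_ [[<-] <-]] [_ [[<-] [<-]]]]|[_ <- ->]] //; split; exists v.
by split=> [[[_ [[<-] <-]] [_ [_ [[<-] [[<-] uv]]]]]|[_ <- uv]] //; split; [exists u | exists u, v].
Qed.

Lemma nd_last a w (i : 'I_(size (a :: w))) : last_node (g := nd (a :: w)) i <-> i = ord_max.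
Proof.
split=> [Hl|-> v /= /eqP v_eq]; last by have := ltn_ord v; rewrite v_eq ltnn.
apply/val_inj/eqP; rewrite /= eqn_leq -ltnS ltn_ord /= leqNgt; apply/negP => i_lt.
have i1 : i.+1 < size (a :: w) by [].
exact: Hl (Ordinal i1) (eqxx _).
Qed.

Lemma is_output_nd2ed_nd a w : is_output nd2ed (nd (a :: w)) (ed (a :: w)).
Proof.
pose f j : 'I_(size (a :: w)) * bool :=
  if unlift ord_max j is Some i then (i, false) else (ord_max, true).
have fE i : f (lmax i) = (i, false) by rewrite /f liftK.
have fmax : f ord_max = (ord_max, true) by rewrite /f unlift_none.
exists f; split.
  move=> j j'; case: (unliftP ord_max j) => [i ->|->]; case: (unliftP ord_max j') => [i' ->|->];
    by rewrite ?fE ?fmax // => -[->].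
split=> [i b|]; last split=> [j|j s j'].
- rewrite out_node_nd2ed; case: b.
    split=> [/(_ isT)/nd_last ->|[j]]; first by exists ord_max.
    by case: (unliftP ord_max j) => [i' ->|->]; rewrite ?fE ?fmax // => -[<-] _; apply/nd_last.
  by split=> // _; exists (lmax i).
- by case: (unliftP ord_max j) => [i ->|->]; rewrite ?fE ?fmax //; apply/sat1_Mlast/nd_last.
case: (unliftP ord_max j) => [i ->|->]; last by rewrite ed_edge_from_max fmax; split=> // -[].
rewrite sat2_nd2ed_edge fE; case: (unliftP ord_max j') => [i' ->|->].
  rewrite fE ed_edge_lift /=; split=> [/andP[ii' /eqP ->]|[_ <- ii']] //.
  by rewrite ii' eqxx.
rewrite fmax ed_edge_to_max /=; split=> [/andP[/eqP ii /eqP ->]|[_ <- ->]].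
  by split=> //; apply/val_inj/eqP; rewrite /= -eqSS ii.
by rewrite /= !eqxx.
Qed.

Lemma out_nodeb_nd2ed_false (g : graph A unit) u : out_nodeb (t:=nd2ed) (g:=g) (u, false).
Proof. exact/asboolP/out_node_nd2ed. Qed.

Lemma nd2ed_edge_out (g : graph A unit) (n : outV nd2ed g) :
  ~~ (val n).2 -> exists m, gE (out_graph nd2ed g) n (glab g (val n).1) m.
Proof.
move=> nb; have [[v uv]|no_succ] := EM (exists v, gE g (val n).1 tt v).
  exists (exist _ (v, false) (out_nodeb_nd2ed_false v)).
  exact/out_edgeP/sat2_nd2ed_edge.
have lb : out_nodeb (t:=nd2ed) (g:=g) ((val n).1, true).
  by apply/asboolP/out_node_nd2ed => _ v uv; apply: no_succ; exists v.
by exists (exist _ ((val n).1, true) lb); apply/out_edgeP/sat2_nd2ed_edge.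
Qed.

Lemma is_output_ed2nd_nd2ed (g : graph A unit) : is_output ed2nd (out_graph nd2ed g) g.
Proof.
exists (fun u => (exist _ (u, false) (out_nodeb_nd2ed_false u), tt)); split.
  by move=> u v [].
split=> [n []|]; last split=> [u|u [] v] /=.
- split=> [[s [/sat1_ed2nd_node [m /out_edgeP /sat2_nd2ed_edge [nb _ _]] _]]|[u [<-]]].
    exists (val n).1; congr pair; apply: val_inj => /=.
    by rewrite [val n]surjective_pairing; case: (val n).2 nb.
  have [m um] := nd2ed_edge_out (n:=exist _ (u, false) (out_nodeb_nd2ed_false u)) isT.
  exists (glab g u); split; first by apply/sat1_ed2nd_node; exists m.
  by move=> s /sat1_ed2nd_node [m' /out_edgeP /sat2_nd2ed_edge []].
- by apply/sat1_ed2nd_node/(nd2ed_edge_out (n:=exist _ (u, false) _)).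
- rewrite sat2_ed2nd_edge; split=> [uv|[s /out_edgeP /sat2_nd2ed_edge []//]].
  by exists (glab g u); apply/out_edgeP/sat2_nd2ed_edge.
Qed.

Definition sink g (u : gV g) := forall s v, ~ gE g u s v.

Definition edge_functional g :=
  forall u v v' s s', gE g u s v -> gE g u s' v' -> v = v' /\ s = s'.

Definition ed_shaped g :=
  edge_functional g /\ exists s0 : gV g, sink s0 /\ forall u : gV g, sink u -> u = s0.

Definition Msink x : mso unit A := MNot (MExN x.+1 (MBigOr (fun s => MEdge unit s x x.+1))).

Lemma sat_Msink g en es x u : sat g (upd en x (Some u)) es (Msink x) <-> sink u.
Proof.
have xy : x != x.+1 by rewrite neq_ltn ltnSn. split=> [Hs s v uv|Hs [v /sat_MBigOr [s [u' [v' [ex [ey e]]]]]]].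
  by apply: Hs; exists v; apply/sat_MBigOr; exists s, u, v; rewrite upd_other // !upd_same.
by move: ex ey e; rewrite upd_other // !upd_same => -[<-] [<-]; apply: Hs.
Qed.

Definition Mfunctional : mso unit A :=
  MAllN 0 (MAllN 1 (MAllN 2 (MBigAnd (fun s => MBigAnd (fun s' =>
    MOr (MNot (MAnd (MEdge unit s 0 1) (MEdge unit s' 0 2)))
        (if s == s' then MEq unit A 1 2 else MFalse _ _)))))).

Definition Mpath : mso unit A :=
  MAnd Mfunctional
    (MExN 0 (MAnd (Msink 0) (MAllN 1 (MOr (MNot (Msink 1)) (MEq unit A 0 1))))).

Lemma sat_Mfunctional g en es : sat g en es Mfunctional <-> edge_functional g.
Proof.
split=> [Hf u v v' s s' uv uv'|Hf u v v'].
  move: (Hf u v v') => /sat_MBigAnd /(_ s) /sat_MBigAnd /(_ s') [].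
    by case; split; [exists u, v | exists u, v'].
  by case: eqP => [<-|_ /(_ I) //]; rewrite /upd /= => -[w [[<-] [<-]]].
apply/sat_MBigAnd => s; apply/sat_MBigAnd => s'.
have [[uv uv']|] := EM (gE g u s v /\ gE g u s' v'); last first.
  by move=> Hn; left => -[[_ [_ [[<-] [[<-] uv]]]] [_ [_ [[<-] [[<-] uv']]]]]; apply: Hn.
by right; have [<- <-] := Hf _ _ _ _ _ uv uv'; rewrite eqxx; exists v.
Qed.

Lemma sat0_Mpath g : sat0 g Mpath <-> ed_shaped g.
Proof.
rewrite /sat0 /Mpath; cbn -[Mfunctional Msink upd]; rewrite sat_Mfunctional.
split=> -[Hf [s0 [Hs0 Huniq]]]; split=> //; exists s0.
  split=> [|u Hu]; first by move/sat_Msink: Hs0.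
  case: (Huniq u) => [[]|[w []]]; first exact/sat_Msink.
  by rewrite /upd /= => -[<-] [<-].
split=> [|u]; first exact/sat_Msink.
have [Hu|Hu] := EM (sink u); last by left => /sat_Msink.
by right; exists u; rewrite (Huniq u Hu).
Qed.

Lemma ed_shaped_ed w : ed_shaped (ed w).
Proof.
split.
  move=> u v v' s s' /andP[/eqP uv /eqP <-] /andP[/eqP uv' /eqP <-]; split.
    by apply: val_inj; rewrite /= uv uv'.
  by apply: set_nth_default; have := ltn_ord v; rewrite uv.
exists ord_max; split=> [s v|u Hu]; first by rewrite ed_edge_from_max.
case: (unliftP ord_max u) Hu => [i ->|-> //] Hu.
by have [j] := ed_edge_succ i; move/Hu.
Qed.

End StringGraphs.

Section AddSink.
Variables (A B : finType) (t : mso_trans unit A B unit).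
Implicit Types g : graph unit A.

Definition fix0 (phi : mso unit A) := mso_ren (fun n => if n == 0 then 0 else n.+1) id phi.

Lemma sat2_fix0 g u v phi : sat2 g u v (fix0 phi) <-> sat1 g u phi.
Proof.
have r_inj : injective (fun n => if n == 0 then 0 else n.+1) by move=> [|m] [|n] //= [->].
rewrite /sat2 /fix0 (sat_ren r_inj (@inj_id nat)) /sat1.
by have -> : upd (upd (fun _ => None) 0 (Some u)) 1 (Some v) \o
             (fun n => if n == 0 then 0 else n.+1) = upd (fun _ => None) 0 (Some u)
  by apply: funext => -[|n].
Qed.

Definition Mno_succ (c : copies t) : mso unit A :=
  MNot (MExN 1 (MBigOr (fun d => MAnd (mso_ren succn id (Mout d)) (edge_f t c d tt)))).

Lemma sat2_Mno_succ g u v c : sat2 g u v (Mno_succ c) <->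
  ~ exists v' d, out_node t g v' d /\ sat2 g u v' (edge_f t c d tt).
Proof.
pose env v' := upd (upd (upd (fun _ => None) 0 (Some u)) 1 (Some v)) 1 (Some v').
have envE v' : env v' = upd (upd (fun _ => None) 0 (Some u)) 1 (Some v').
  by apply: funext => -[|[|n]].
have out_d v' d : sat g (env v') (fun _ => set0) (mso_ren succn id (Mout d)) <->
                  out_node t g v' d.
  rewrite sat_ren; [|exact: succn_inj|exact: inj_id].
  have -> : env v' \o succn = upd (fun _ => None) 0 (Some v') by apply: funext => -[|n].
  exact: sat_Mout.
rewrite /sat2 /Mno_succ; cbn -[Mout MBigOr upd]; split=> Hn [v'].
- move=> [d [vd e]]; apply: Hn; exists v'; apply/sat_MBigOr; exists d.
  by split; [exact/out_d | rewrite -/(env v') envE].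
- move=> /sat_MBigOr [d [/out_d vd e]]; apply: Hn; exists v', d.
  by split; last by move: e; rewrite -/(env v') envE.
Qed.

Definition add_sink : mso_trans unit A unit B :=
  @MsoTrans unit A unit B (copies t + unit)%type
    (MAnd (Mpath A) (dom_f t))
    (fun c _ => if c is inl c2 then Mout c2 else Msink A 0)
    (fun c d s => match c, d with
                  | inl c2, inl d2 => MAnd (edge_f t c2 d2 tt) (fix0 (node_f t c2 s))
                  | inl c2, inr _ => MAnd (fix0 (node_f t c2 s)) (Mno_succ c2)
                  | inr _, _ => MFalse _ _
                  end).

Lemma out_node_add_sink_inl g u c : out_node add_sink g u (inl c) <-> out_node t g u c.
Proof.
by split=> [[_ [/sat_Mout]]|uc] //; exists tt; split=> [|[]//]; exact/sat_Mout.
Qed.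

Lemma out_node_add_sink_inr g u x : out_node add_sink g u (inr x) <-> sink u.
Proof.
by split=> [[_ [/sat_Msink]]|uc] //; exists tt; split=> [|[]//]; exact/sat_Msink.
Qed.

Lemma sat2_add_sink_inl g u v c d s :
  sat2 g u v (edge_f add_sink (inl c) (inl d) s) <->
  sat2 g u v (edge_f t c d tt) /\ sat1 g u (node_f t c s).
Proof. by rewrite sat2_MAnd sat2_fix0. Qed.

Lemma sat2_add_sink_inr g u v c x s :
  sat2 g u v (edge_f add_sink (inl c) (inr x) s) <->
  sat1 g u (node_f t c s) /\ ~ exists v' d, out_node t g v' d /\ sat2 g u v' (edge_f t c d tt).
Proof. by rewrite sat2_MAnd sat2_fix0 sat2_Mno_succ. Qed.

Lemma sat2_add_sink_from_sink g u v x d s : ~ sat2 g u v (edge_f add_sink (inr x) d s).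
Proof. exact: sat_MFalse. Qed.

Lemma is_output_add_sink g (z : seq B) :
  ed_shaped g -> iso (nd z) (out_graph t g) -> is_output add_sink g (ed z).
Proof.
case=> _ [s0 [s0_sink s0_uniq]] [phi [phi_bij [phi_lab phi_edge]]].
have [phi' phiK phi'K] := phi_bij.
have labE i : out_lab (phi i) = tnth (in_tuple z) i := phi_lab i.
pose f j : gV g * copies add_sink :=
  if unlift ord_max j is Some i then ((val (phi i)).1, inl (val (phi i)).2) else (s0, inr tt).
have fE i : f (lift ord_max i) = ((val (phi i)).1, inl (val (phi i)).2) by rewrite /f liftK.
have fmax : f ord_max = (s0, inr tt) by rewrite /f unlift_none.
have succE i : (exists v d, out_node t g v d /\
                  sat2 g (val (phi i)).1 v (edge_f t (val (phi i)).2 d tt)) <-> i.+1 < size z.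
  split=> [[v [d [vd e]]]|lt].
    have vdb : out_nodeb (t:=t) (g:=g) (v, d) by exact/asboolP.
    have : gE (out_graph t g) (phi i) tt (exist _ (v, d) vdb) by exact/out_edgeP.
    by rewrite -(phi'K (exist _ (v, d) vdb)) phi_edge => /eqP <-.
  exists (val (phi (Ordinal lt))).1, (val (phi (Ordinal lt))).2; split; first exact: out_nodeP.
  by apply/out_edgeP; rewrite phi_edge /=.
exists f; split.
  move=> j j'; case: (unliftP ord_max j) => [i ->|->]; case: (unliftP ord_max j') => [i' ->|->];
    rewrite ?fE ?fmax // => -[e1 e2]; congr lift; apply: (bij_inj phi_bij); apply: val_inj.
  by rewrite [val (phi i)]surjective_pairing [val (phi i')]surjective_pairing e1 e2.
split=> [u [c|[]]|]; last split=> [j|j a j'].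
- rewrite out_node_add_sink_inl; split=> [uc|[j]].
    have ucb : out_nodeb (t:=t) (g:=g) (u, c) by exact/asboolP.
    by exists (lift ord_max (phi' (exist _ (u, c) ucb))); rewrite fE phi'K.
  by case: (unliftP ord_max j) => [i ->|->]; rewrite ?fE ?fmax // => -[<- <-]; apply: out_nodeP.
- rewrite out_node_add_sink_inr; split=> [/s0_uniq ->|[j]]; first by exists ord_max.
  by case: (unliftP ord_max j) => [i ->|->]; rewrite ?fE ?fmax // => -[<-].
- case: (unliftP ord_max j) => [i ->|->]; rewrite ?fE ?fmax; last exact/sat_Msink.
  exact/sat_Mout/out_nodeP.
case: (unliftP ord_max j) => [i ->|->]; last first.
  by rewrite ed_edge_from_max fmax; split=> //; rewrite /sat2 /= => /(_ I).
rewrite fE; case: (unliftP ord_max j') => [i' ->|->].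
  rewrite fE ed_edge_lift sat2_add_sink_inl -out_edgeP phi_edge out_labE labE.
  by split=> [/andP[ii' /eqP ->]|[ii' <-]]; last rewrite eqxx andbT.
rewrite fmax ed_edge_to_max sat2_add_sink_inr out_labE labE succE.
split=> [/andP[/eqP ii /eqP ->]|[<- nlt]]; first by rewrite ii ltnn.
by rewrite eqxx andbT eqn_leq ltn_ord leqNgt; apply/negP.
Qed.

End AddSink.

Section PathGraphs.
Variables (A : finType) (g : graph unit A).
Hypothesis g_shaped : ed_shaped g.

Lemma out_node_ed2nd_shaped u c : out_node (ed2nd A) g u c <-> ~ sink u.
Proof.
have [funct _] := g_shaped.
split=> [[s [/sat1_ed2nd_node [v uv] _]] u_sink|u_nsink]; first exact: u_sink uv.
have [[s [v uv]]|no_edge] := EM (exists s v, gE g u s v); last first.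
  by case: u_nsink => s v uv; apply: no_edge; exists s, v.
exists s; split=> [|s' /sat1_ed2nd_node [v' uv']]; first by apply/sat1_ed2nd_node; exists v.
by case: (funct _ _ _ _ _ uv uv').
Qed.

Lemma is_output_add_sink_ed2nd : is_output (add_sink (ed2nd A)) g g.
Proof.
have [funct [s0 [s0_sink s0_uniq]]] := g_shaped.
pose c (u : gV g) : copies (add_sink (ed2nd A)) :=
  if `[< sink u >] then inr tt else inl tt.
have c_sink u : sink u -> c u = inr tt by rewrite /c => /asboolP ->.
have c_nsink u : ~ sink u -> c u = inl tt by rewrite /c => /asboolPn /negbTE ->.
have out_c u : out_node (add_sink (ed2nd A)) g u (c u).
  have [u_sink|u_nsink] := EM (sink u).
    by rewrite c_sink //; apply/out_node_add_sink_inr.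
  by rewrite c_nsink //; apply/out_node_add_sink_inl/out_node_ed2nd_shaped.
exists (fun u => (u, c u)); split; first by move=> u v [].
split=> [u d|]; last split=> [u|u a v].
- split=> [ud|[v [-> <-]] //]; exists u; congr pair.
  have [u_sink|u_nsink] := EM (sink u);
    [rewrite (c_sink _ u_sink) | rewrite (c_nsink _ u_nsink)]; case: d ud => -[] //.
    by move/out_node_add_sink_inl/out_node_ed2nd_shaped.
  by move/out_node_add_sink_inr.
- by have [[] [Hu _]] := out_c u; case: (glab g u).
have [u_sink|u_nsink] := EM (sink u).
  by rewrite c_sink //; split=> [/u_sink|/sat2_add_sink_from_sink].
rewrite c_nsink //; have [v_sink|v_nsink] := EM (sink v).
  rewrite c_sink // sat2_add_sink_inr sat1_ed2nd_node; split=> [uv|[[v' uv'] no_succ]].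
    split; first by exists v.
    move=> [v' [[] [/out_node_ed2nd_shaped v'_nsink /sat2_ed2nd_edge [s uv']]]].
    by case: (funct _ _ _ _ _ uv uv') => vv' _; apply: v'_nsink; rewrite -vv'.
  have [v'_sink|v'_nsink] := EM (sink v').
    by rewrite (s0_uniq _ v_sink) -(s0_uniq _ v'_sink).
  by case: no_succ; exists v', tt; split; [exact/out_node_ed2nd_shaped | apply/sat2_ed2nd_edge; exists a].
rewrite c_nsink // sat2_add_sink_inl sat2_ed2nd_edge sat1_ed2nd_node.
split=> [uv|[[s uv] [v' uv']]]; first by split; [exists a | exists v].
by case: (funct _ _ _ _ _ uv' uv) => _ ->.
Qed.

End PathGraphs.

Lemma iso_ed_of_ed2nd (A : finType) (g : graph unit A) w :
  ed_shaped g -> iso (out_graph (ed2nd A) g) (nd w) -> iso g (ed w).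
Proof.
move=> g_shaped Nw.
apply: iso_trans ((is_outputE _ _ _).1 (is_output_add_sink_ed2nd g_shaped)) _.
exact/iso_sym/is_outputE/(is_output_add_sink g_shaped (iso_sym Nw)).
Qed.

Lemma iso_nd_of_nd2ed (A : finType) (g : graph A unit) w :
  iso (out_graph (nd2ed A) g) (ed w) -> iso g (nd w).
Proof.
move=> Ew; apply: iso_trans ((is_outputE _ _ _).1 (is_output_ed2nd_nd2ed g)) _.
apply: iso_trans (out_graph_iso _ Ew) _.
exact/iso_sym/is_outputE/is_output_ed2nd_ed.
Qed.

Lemma ed_shaped_iso (A : finType) (g : graph unit A) w : iso g (ed w) -> ed_shaped g.
Proof. by move=> /iso_sym gw; apply/sat0_Mpath/(iso_sat0 _ gw)/sat0_Mpath/ed_shaped_ed. Qed.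

Lemma empty_iso_nd_nil (A : finType) (g : graph A unit) :
  (gV g -> False) -> iso g (nd [::]).
Proof. by move=> g0; apply: iso_empty => // -[]. Qed.

Lemma out_graph_empty S1 G1 S2 G2 (t : mso_trans S1 G1 S2 G2) g :
  (gV g -> False) -> gV (out_graph t g) -> False.
Proof. by move=> g0 n; apply: g0 (val n).1. Qed.

Section NdToEd.
Variables (S1 S2 : finType) (m : seq S1 -> seq S2 -> Prop) (t : mso_trans S1 unit S2 unit).
Hypothesis t_nd : forall g h, nd_rel m g h <-> sat0 g (dom_f t) /\ is_output t g h.

Lemma nd_rel_nil z : m [::] z -> z = [::].
Proof.
move=> mz; have [_ /is_outputE [f _]] := (t_nd (nd [::]) (nd z)).1 (ex_intro _ [::] (ex_intro _ z (conj mz (conj (iso_refl _) (iso_refl _))))).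
by case: z mz f => // a z _ f; case: (f ord0) => -[[]].
Qed.

Definition ed_trans := add_sink (mso_comp (ed2nd S1) t).

Lemma ed_trans_out g z : ed_shaped g -> iso (out_graph t (out_graph (ed2nd S1) g)) (nd z) ->
  iso (out_graph ed_trans g) (ed z).
Proof.
move=> g_shaped Nz; apply/iso_sym/is_outputE/is_output_add_sink => //.
exact/iso_sym/(iso_trans (out_graph_comp _ _ g) Nz).
Qed.

Lemma ed_rel_trans g h : ed_rel m g h <-> sat0 g (dom_f ed_trans) /\ is_output ed_trans g h.
Proof.
split=> [[w [z [mwz [gw hz]]]]|[/sat0_MAnd [/sat0_Mpath g_shaped /mso_comp_dom [_ dom_t]] /is_outputE out]].
  have g_shaped := ed_shaped_iso gw.
  have Nw : iso (out_graph (ed2nd S1) g) (nd w).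
    exact: iso_trans (out_graph_iso _ gw) (iso_sym ((is_outputE _ _ _).1 (is_output_ed2nd_ed w))).
  have [dom_t /is_outputE Nz] := (t_nd _ (nd z)).1 (ex_intro _ w (ex_intro _ z (conj mwz (conj Nw (iso_refl _))))).
  split; first by apply/sat0_MAnd; split; [exact/sat0_Mpath | exact/mso_comp_dom].
  exact/is_outputE/(iso_trans hz)/iso_sym/ed_trans_out/iso_sym.
have [w [z [mwz [Nw Nz]]]] := (t_nd _ _).2 (conj dom_t (is_output_graph t (out_graph (ed2nd S1) g))).
exists w, z; split=> //; split; first exact: iso_ed_of_ed2nd g_shaped Nw.
exact: iso_trans out (ed_trans_out g_shaped Nz).
Qed.

End NdToEd.

Section EdToNd.
Variables (S1 S2 : finType) (m : seq S1 -> seq S2 -> Prop) (t : mso_trans unit S1 unit S2).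
Hypotheses (t_ed : forall g h, ed_rel m g h <-> sat0 g (dom_f t) /\ is_output t g h)
  (m_nil : forall z, m [::] z -> z = [::]).

Definition nd_core := mso_comp (mso_comp (nd2ed S1) t) (ed2nd S2).

(* [ed2nd] and [nd2ed] cannot create or see the empty word, so the empty input is
   accepted separately, according to the (statically known) truth of [m [::] [::]]. *)
Definition nd_trans : mso_trans S1 unit S2 unit :=
  @MsoTrans S1 unit S2 unit (copies nd_core)
    (MOr (MAnd (MNot (MExN 0 (MTrue _ _)))
               (Mbool S1 unit `[< m [::] [::] >]))
         (dom_f nd_core))
    (node_f nd_core) (edge_f nd_core).

Lemma nd_core_dom g : sat0 g (dom_f nd_core) <-> sat0 (out_graph (nd2ed S1) g) (dom_f t).
Proof. by rewrite !mso_comp_dom; split=> [[[]]|] //. Qed.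

Lemma nd_core_out g z : iso (out_graph t (out_graph (nd2ed S1) g)) (ed z) ->
  iso (out_graph nd_core g) (nd z).
Proof.
move=> Ez; apply: iso_trans (out_graph_comp _ _ g) _.
apply: iso_trans (out_graph_iso _ (out_graph_comp _ _ g)) _.
apply: iso_trans (out_graph_iso _ Ez) _.
exact/iso_sym/is_outputE/is_output_ed2nd_ed.
Qed.

Lemma nd_rel_trans g h : nd_rel m g h <-> sat0 g (dom_f nd_trans) /\ is_output nd_trans g h.
Proof.
rewrite -[is_output nd_trans g h]/(is_output nd_core g h).
split=> [[w [z [mwz [gw hz]]]]|[/sat0_MOr dom /is_outputE out]].
  case: w mwz gw => [|a w] mwz gw.
    have z0 := m_nil mwz; subst z.
    have g0 : gV g -> False by case: gw => f _ /f [].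
    split; first by apply/sat0_MOr; left; split=> [[u]|]; [case: (g0 u) | exact/sat_Mbool/asboolP].
    apply/is_outputE/iso_empty; last exact: out_graph_empty.
    by case: hz => f _ /f [].
  have Ew : iso (out_graph (nd2ed S1) g) (ed (a :: w)).
    exact: iso_trans (out_graph_iso _ gw) (iso_sym ((is_outputE _ _ _).1 (is_output_nd2ed_nd a w))).
  have [dom_t /is_outputE Ez] :=
    (t_ed _ (ed z)).1 (ex_intro _ (a :: w) (ex_intro _ z (conj mwz (conj Ew (iso_refl _))))).
  split; first by apply/sat0_MOr; right; apply/nd_core_dom.
  exact/is_outputE/(iso_trans hz)/iso_sym/nd_core_out/iso_sym.
case: dom => [/sat0_MAnd [g0 /sat_Mbool/asboolP mnil]|/nd_core_dom dom_t].
  have {}g0 : gV g -> False by move=> u; apply: g0; exists u.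
  exists [::], [::]; split=> //; split; first exact: empty_iso_nd_nil.
  exact: iso_trans out (empty_iso_nd_nil (out_graph_empty g0)).
have [w [z [mwz [Ew Ez]]]] := (t_ed _ _).2 (conj dom_t (is_output_graph t _)).
exists w, z; split=> //; split; first exact: iso_nd_of_nd2ed Ew.
exact: iso_trans out (nd_core_out Ez).
Qed.

End EdToNd.

Theorem lemma3p9 (S1 S2 : finType) (m : seq S1 -> seq S2 -> Prop) :
  @mso_definable S1 unit S2 unit (nd_rel m) <->
  (@mso_definable unit S1 unit S2 (ed_rel m) /\
   (forall z, m [::] z -> z = [::])).
Proof.
split=> [[t t_nd]|[[t t_ed] m_nil]].
  by split; [exists (ed_trans t); exact: ed_rel_trans | exact: nd_rel_nil t_nd].
by exists (nd_trans m t); exact: nd_rel_trans.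
Qed.
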